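(* Let $\alpha_{2,3} := \sum_{m=1}^{\infty} \frac{1}{3^m 2^{3^m}}$ (the Stoneham number). Then the sequence $(\{2^n \alpha_{2,3}\})_{n \in \mathbb{N}}$ does not have Poissonian pair correlations.
   Context: $\{x\}$ denotes the fractional part of $x$ and $\|x\|$ the distance from $x$ to the nearest integer. A sequence $(x_n)_{n\in\mathbb{N}}$ in $[0,1)$ has Poissonian pair correlations if for every $s \geq 0$, $F_N(s) := \frac{1}{N}\#\{1 \leq l \neq m \leq N : \|x_l - x_m\| \leq s/N\} \to 2s$ as $N\to\infty$. *)

From Stdlib Require Import Reals Lra List.
From Coquelicot Require Import Coquelicot.
Open Scope R_scope.

Definition frac (x : R) : R := x - IZR (Int_part x).

Definition dist_nint (x : R) : R := Rmin (frac x) (1 - frac x).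

Definition pair_count (x : nat -> R) (N : nat) (s : R) : nat :=
  length (filter
    (fun p : nat * nat =>
       if Nat.eq_dec (fst p) (snd p) then false
       else if Rle_dec (dist_nint (x (fst p) - x (snd p))) (s / INR N)
            then true else false)
    (list_prod (seq 1 N) (seq 1 N))).

Definition F_N (x : nat -> R) (N : nat) (s : R) : R :=
  INR (pair_count x N s) / INR N.

(* Poissonian pair correlations (sequence indexed x_1, x_2, ...) *)
Definition poissonian_pair_correlations (x : nat -> R) : Prop :=
  forall s : R, 0 <= s -> is_lim_seq (fun N => F_N x N s) (2 * s).

Definition stoneham_2_3 : R :=
  Series (fun k : nat => / (3 ^ (S k) * 2 ^ (3 ^ (S k)))).

(* Write α for the Stoneham number and x_n = {2^n α}.  Since 3^(j+1) divides
   2^(2·3^j) - 1, for 3^(j+1) <= n the number 2^n (2^(2·3^j) - 1) α is an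
   integer up to the tail of the series starting at 1/(3^(j+2) 2^(3^(j+2))),
   which it scales to at most 1/(8·3^(j+2)).  Hence, for N = 3^(j+2), the
   3^(j+1) pairs (n + 2·3^j, n) with 3^(j+1) <= n < 2·3^(j+1) are within
   distance (1/8)/N, so F_N(1/8) >= 1/3 along these N, whereas a Poissonian
   sequence would have F_N(1/8) -> 1/4. *)

From Stdlib Require Import Reals Lra Lia List.
From Coquelicot Require Import Coquelicot.
Open Scope R_scope.

Lemma frac_IZR_add (z : Z) (r : R) : 0 <= r < 1 -> frac (IZR z + r) = r.
Proof.
  intros Hr.
  destruct (Int_part_frac_part_spec (IZR z + r) z r Hr eq_refl) as [_ Hfrac].
  symmetry. exact Hfrac.
Qed.

Lemma dist_nint_frac_sub_le (x y r : R) (z : Z) :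
  x - y = IZR z + r -> 0 <= r < 1 -> dist_nint (frac x - frac y) <= r.
Proof.
  intros Hxy Hr.
  assert (Hfrac : frac x - frac y = IZR (z + Int_part y - Int_part x) + r).
  { unfold frac. rewrite minus_IZR, plus_IZR. lra. }
  unfold dist_nint. rewrite Hfrac, frac_IZR_add by exact Hr. apply Rmin_l.
Qed.

Lemma pair_count_ge_shift (x : nat -> R) (N P lo len : nat) (s : R) :
  (0 < P)%nat -> (1 <= lo)%nat -> (lo + len + P <= S N)%nat ->
  (forall n, (lo <= n < lo + len)%nat -> dist_nint (x (n + P)%nat - x n) <= s / INR N) ->
  (len <= pair_count x N s)%nat.
Proof.
  intros HP Hlo HN Hclose. unfold pair_count.
  set (L := map (fun n => (n + P, n)%nat) (seq lo len)).
  replace len with (length L) by now unfold L; rewrite length_map, length_seq.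
  apply NoDup_incl_length.
  - apply NoDup_map_NoDup_ForallPairs; [|apply seq_NoDup].
    intros u w _ _ E. injection E. lia.
  - intros [p q] Hin. apply in_map_iff in Hin as [n [E Hn]].
    injection E as <- <-. apply in_seq in Hn.
    apply filter_In. split.
    + apply in_prod; apply in_seq; lia.
    + cbn [fst snd].
      destruct (Nat.eq_dec _ _); [lia|].
      destruct (Rle_dec _ _) as [_|Hfar]; [reflexivity|].
      exfalso. apply Hfar, Hclose. exact Hn.
Qed.

Lemma not_poissonian_of_F_N_ge (x : nat -> R) (Ns : nat -> nat) (s c : R) :
  0 <= s -> 2 * s < c -> (forall j, (j <= Ns j)%nat) ->
  (forall j, c <= F_N x (Ns j) s) -> ~ poissonian_pair_correlations x.
Proof.
  intros Hs Hc HNs HF Hppc.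
  assert (Hsub : filterlim Ns eventually eventually).
  { intros Q [M HM]. exists M. intros j Hj. apply HM. specialize (HNs j). lia. }
  assert (Hlim := is_lim_seq_subseq _ _ Ns Hsub (Hppc s Hs)).
  assert (Hle := is_lim_seq_le (fun _ => c) _ c (2 * s) HF (is_lim_seq_const c) Hlim).
  simpl in Hle. lra.
Qed.

Lemma Series_geom_dominated (u : nat -> R) (c q : R) :
  0 <= q < 1 -> (forall i, 0 <= u i <= c * q ^ i) ->
  ex_series u /\ 0 <= Series u <= c / (1 - q).
Proof.
  intros Hq Hu.
  assert (Hq' : Rabs q < 1) by (rewrite Rabs_pos_eq; lra).
  assert (Hgeom : ex_series (fun i => c * q ^ i))
    by apply (ex_series_scal_l c (fun i => q ^ i)), ex_series_geom, Hq'.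
  assert (Hex : ex_series u).
  { apply (@ex_series_le R_AbsRing R_CompleteNormedModule _ (fun i => c * q ^ i)); [|exact Hgeom].
    intros i. change (Rabs (u i) <= c * q ^ i). rewrite Rabs_pos_eq; apply Hu. }
  split; [exact Hex|split].
  - replace 0 with (Series (fun i => 0 * u i)) by (rewrite Series_scal_l; ring).
    apply Series_le; [|exact Hex]. intros i. specialize (Hu i). lra.
  - unfold Rdiv. rewrite <- Series_geom, <- Series_scal_l by exact Hq'.
    apply Series_le; [exact Hu | exact Hgeom].
Qed.

Lemma pow2_two_pow3_congr (j : nat) : exists t, (2 ^ (2 * 3 ^ j) = 1 + 3 ^ S j * t)%nat.
Proof.
  induction j as [|j [t IH]].
  - now exists 1%nat.
  - exists (t + 3 * 3 ^ j * t ^ 2 + 3 * (3 ^ j) ^ 2 * t ^ 3)%nat.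
    replace (2 * 3 ^ S j)%nat with (2 * 3 ^ j * 3)%nat by (simpl; lia).
    rewrite Nat.pow_mul_r, IH. simpl. ring.
Qed.

Definition stoneham_term (k : nat) : R := / (3 ^ S k * 2 ^ 3 ^ S k).

Definition stoneham_tail (K : nat) : R := Series (fun i => stoneham_term (K + i)).

Lemma stoneham_term_pos (k : nat) : 0 < stoneham_term k.
Proof.
  apply Rinv_0_lt_compat, Rmult_lt_0_compat; apply pow_lt; lra.
Qed.

Lemma stoneham_term_le (K i : nat) : stoneham_term (K + i) <= stoneham_term K * (/ 3) ^ i.
Proof.
  unfold stoneham_term. rewrite pow_inv, <- Rinv_mult.
  apply Rinv_le_contravar.
  - apply Rmult_lt_0_compat; [apply Rmult_lt_0_compat|]; apply pow_lt; lra.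
  - replace (S (K + i)) with (S K + i)%nat by lia. rewrite pow_add.
    assert (H2 : 2 ^ 3 ^ S K <= 2 ^ 3 ^ (S K + i)).
    { apply Rle_pow; [lra|]. apply Nat.pow_le_mono_r; lia. }
    assert (0 < 3 ^ S K * 3 ^ i) by (apply Rmult_lt_0_compat; apply pow_lt; lra).
    replace (3 ^ S K * 2 ^ 3 ^ S K * 3 ^ i) with (3 ^ S K * 3 ^ i * 2 ^ 3 ^ S K) by ring.
    apply Rmult_le_compat_l; lra.
Qed.

Lemma stoneham_tail_bounds (K : nat) :
  ex_series (fun i => stoneham_term (K + i)) /\
  0 <= stoneham_tail K <= 3 / 2 * stoneham_term K.
Proof.
  destruct (Series_geom_dominated (fun i => stoneham_term (K + i)) (stoneham_term K) (/ 3))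
    as [Hex Hbnd].
  - lra.
  - intros i. split; [left; apply stoneham_term_pos | apply stoneham_term_le].
  - split; [exact Hex|]. unfold stoneham_tail. lra.
Qed.

Lemma stoneham_split (j : nat) :
  stoneham_2_3 = sum_f_R0 stoneham_term j + stoneham_tail (S j).
Proof.
  apply (Series_incr_n stoneham_term (S j)); [lia|].
  exact (proj1 (stoneham_tail_bounds 0)).
Qed.

Lemma pow2_mul_stoneham_tail_le (K m : nat) :
  (m + 4 <= 3 ^ S K)%nat -> 2 ^ m * stoneham_tail K <= / (8 * 3 ^ S K).
Proof.
  intros Hm. destruct (stoneham_tail_bounds K) as [_ [_ Htail]].
  unfold stoneham_term in Htail.
  replace (3 ^ S K)%nat with (m + 4 + (3 ^ S K - (m + 4)))%nat in Htail by lia.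
  rewrite !pow_add in Htail.
  set (d := (3 ^ S K - (m + 4))%nat) in Htail.
  assert (H2m : 0 < 2 ^ m) by (apply pow_lt; lra).
  assert (H3 : 0 < 3 ^ S K) by (apply pow_lt; lra).
  assert (H2d : 1 <= 2 ^ d) by (apply pow_R1_Rle; lra).
  apply (Rmult_le_compat_l (2 ^ m)) in Htail; [|lra].
  eapply Rle_trans; [exact Htail|].
  replace (2 ^ 4) with 16 in * by ring.
  apply (Rmult_le_reg_r (16 * 3 ^ S K * 2 ^ d)); [nra|].
  field_simplify; [|lra|lra]. nra.
Qed.

Lemma stoneham_term_scaled_nat (k e f t : nat) :
  (3 ^ S k <= e)%nat -> (S k <= f)%nat ->
  2 ^ e * 3 ^ f * INR t * stoneham_term k = INR (2 ^ (e - 3 ^ S k) * 3 ^ (f - S k) * t).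
Proof.
  intros He Hf.
  rewrite !mult_INR, !pow_INR. replace (INR 2) with 2 by reflexivity.
  replace (INR 3) with 3 by (simpl; ring).
  replace e with (e - 3 ^ S k + 3 ^ S k)%nat at 1 by lia.
  replace f with (f - S k + S k)%nat at 1 by lia.
  rewrite !pow_add. unfold stoneham_term.
  assert (0 < 3 ^ S k) by (apply pow_lt; lra).
  assert (0 < 2 ^ 3 ^ S k) by (apply pow_lt; lra).
  field. lra.
Qed.

Lemma stoneham_head_scaled_nat (j e f t : nat) :
  (3 ^ S j <= e)%nat -> (S j <= f)%nat ->
  exists z : nat, 2 ^ e * 3 ^ f * INR t * sum_f_R0 stoneham_term j = INR z.
Proof.
  induction j as [|j IH]; intros He Hf.
  - eexists. now apply stoneham_term_scaled_nat.
  - assert (H3 : (3 ^ S j <= 3 ^ S (S j))%nat) by (apply Nat.pow_le_mono_r; lia).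
    destruct IH as [z Hz]; [lia | lia|].
    exists (z + 2 ^ (e - 3 ^ S (S j)) * 3 ^ (f - S (S j)) * t)%nat.
    rewrite plus_INR, <- Hz, <- stoneham_term_scaled_nat by lia.
    simpl sum_f_R0. ring.
Qed.

Lemma stoneham_mul_pow2_period (j n : nat) : (3 ^ S j <= n)%nat ->
  exists z : nat, 2 ^ n * (2 ^ (2 * 3 ^ j) - 1) * stoneham_2_3 =
    INR z + 2 ^ n * (2 ^ (2 * 3 ^ j) - 1) * stoneham_tail (S j).
Proof.
  intros Hn.
  destruct (pow2_two_pow3_congr j) as [t Ht].
  assert (Hmult : 2 ^ (2 * 3 ^ j) - 1 = 3 ^ S j * INR t).
  { apply (f_equal INR) in Ht.
    rewrite pow_INR, plus_INR, mult_INR, pow_INR in Ht.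
    replace (INR 2) with 2 in Ht by reflexivity.
    replace (INR 3) with 3 in Ht by (simpl; ring). simpl INR in Ht. lra. }
  destruct (stoneham_head_scaled_nat j n (S j) t) as [z Hz]; [lia | lia |].
  exists z. rewrite <- Hz, stoneham_split with (j := j), Hmult. ring.
Qed.

Definition stoneham_orbit (n : nat) : R := frac (2 ^ n * stoneham_2_3).

Lemma stoneham_orbit_shift_close (j n : nat) :
  (1 <= j)%nat -> (3 ^ S j <= n < 2 * 3 ^ S j)%nat ->
  dist_nint (stoneham_orbit (n + 2 * 3 ^ j) - stoneham_orbit n) <= / (8 * 3 ^ S (S j)).
Proof.
  intros Hj Hn.
  destruct (stoneham_mul_pow2_period j n) as [z Hz]; [lia|].
  set (P := (2 * 3 ^ j)%nat) in *.
  set (r := 2 ^ n * (2 ^ P - 1) * stoneham_tail (S j)) in Hz.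
  assert (Hdiff : 2 ^ (n + P) * stoneham_2_3 - 2 ^ n * stoneham_2_3 = IZR (Z.of_nat z) + r).
  { rewrite <- INR_IZR_INZ, <- Hz, pow_add. ring. }
  assert (H3j : (3 <= 3 ^ j)%nat).
  { change 3%nat with (3 ^ 1)%nat at 1. apply Nat.pow_le_mono_r; lia. }
  assert (Hsmall : 2 ^ (n + P) * stoneham_tail (S j) <= / (8 * 3 ^ S (S j))).
  { apply pow2_mul_stoneham_tail_le. unfold P. simpl. simpl in Hn. lia. }
  assert (H2P : 1 <= 2 ^ P) by (apply pow_R1_Rle; lra).
  assert (H2n : 0 < 2 ^ n) by (apply pow_lt; lra).
  destruct (stoneham_tail_bounds (S j)) as [_ [Htail0 _]].
  assert (Hr : 0 <= r <= / (8 * 3 ^ S (S j))).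
  { unfold r. split.
    - apply Rmult_le_pos; [|exact Htail0]. apply Rmult_le_pos; lra.
    - eapply Rle_trans; [|exact Hsmall]. rewrite pow_add.
      apply Rmult_le_compat_r; [exact Htail0|]. nra. }
  assert (Hinv : / (8 * 3 ^ S (S j)) < 1).
  { assert (1 <= 3 ^ S (S j)) by (apply pow_R1_Rle; lra).
    rewrite <- Rinv_1. apply Rinv_lt_contravar; lra. }
  eapply Rle_trans; [|apply Hr].
  apply (dist_nint_frac_sub_le _ _ _ _ Hdiff). lra.
Qed.

Lemma F_N_stoneham_orbit_ge (j : nat) :
  (1 <= j)%nat -> 1 / 3 <= F_N stoneham_orbit (3 ^ S (S j)) (1 / 8).
Proof.
  intros Hj.
  assert (Hcount : (3 ^ S j <= pair_count stoneham_orbit (3 ^ S (S j)) (1 / 8))%nat).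
  { pose proof (Nat.pow_nonzero 3 j ltac:(lia)).
    apply (pair_count_ge_shift _ _ (2 * 3 ^ j) (3 ^ S j)); [simpl; lia ..|].
    - intros n Hn. rewrite pow_INR. replace (INR 3) with 3 by (simpl; ring).
      replace (1 / 8 / 3 ^ S (S j)) with (/ (8 * 3 ^ S (S j)))
        by (field; apply pow_nonzero; lra).
      apply stoneham_orbit_shift_close; lia. }
  apply le_INR in Hcount. unfold F_N.
  rewrite !pow_INR in *. replace (INR 3) with 3 in * by (simpl; ring).
  assert (0 < 3 ^ S j) by (apply pow_lt; lra).
  simpl pow in *. apply (Rmult_le_reg_r (3 * 3 ^ j)); [simpl in *; lra|].
  field_simplify; simpl in *; lra.
Qed.

Theorem theorem3 :
  ~ poissonian_pair_correlations (fun n : nat => frac (2 ^ n * stoneham_2_3)).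
Proof.
  apply (not_poissonian_of_F_N_ge stoneham_orbit (fun j => 3 ^ S (S (S j)))%nat (1 / 8) (1 / 3)).
  - lra.
  - lra.
  - intros j. pose proof (Nat.pow_gt_lin_r 3 (S (S (S j)))). lia.
  - intros j. apply F_N_stoneham_orbit_ge. lia.
Qed.
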